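(* Assume $r$ is not a codeword of the GRS code (equivalently $\deg R\ge k$). Let $B\in\mathbb F_q[X]^{(\ell+1)\times(\ell+1)}$ represent a basis of $M_{s,\ell}$ such that $BW_\ell$ is in weak Popov form. Let $C^{\mathrm I}$ be the $(\ell+2)\times(\ell+2)$ matrix whose first $\ell+1$ rows are the rows of $B$ each extended by a final zero entry, and whose last row is the coefficient vector (of length $\ell+2$) of $Y^{\ell-s+1}(Y-R(X))^s$. Then $\Delta(C^{\mathrm I}W_{\ell+1})=s(\deg R-k+1)\le s(n-k)$.
   Context: Let $\mathbb F_q$ be a finite field, $1\le k<n<q$, $\alpha_0,\dots,\alpha_{n-1}$ distinct nonzero elements of $\mathbb F_q$, $w_0,\dots,w_{n-1}$ nonzero elements of $\mathbb F_q$. The GRS code is $\{(w_0f(\alpha_0),\dots,w_{n-1}f(\alpha_{n-1})): f\in\mathbb F_q[X],\deg f<k\}$. Let $r\in\mathbb F_q^n$, $r_i'=r_i/w_i$, and $R$ the unique polynomial of degree $<n$ with $R(\alpha_i)=r_i'$. For positive integers $s\le\ell$, $M_{s,\ell}$ is the $\mathbb F_q[X]$-module of all $Q\in\mathbb F_q[X,Y]$ of $Y$-degree at most $\ell$ such that for each $i$, $Q(X+\alpha_i,Y+r_i')$ has no monomials of total degree less than $s$. A polynomial $\sum_{t}Q_t(X)Y^t$ has coefficient vector $(Q_0,Q_1,\dots)$; a matrix represents a basis if its rows are the coefficient vectors of the basis elements. $W_\ell=\mathrm{diag}(1,X^{k-1},\dots,X^{\ell(k-1)})$. For $v\in\mathbb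 F_q[X]^m$, $\deg v=\max_i\deg v_i$, $\mathrm{LP}(v)=\max\{i:\deg v_i=\deg v\}$; a matrix is in weak Popov form if its rows have pairwise different leading positions. For a square matrix $V$ with rows $v_i$, $\deg V=\sum_i\deg v_i$ and $\Delta(V)=\deg V-\deg\det V$. *)

From HB Require Import structures.
From mathcomp Require Import all_boot all_order all_algebra.
Set Implicit Arguments. Unset Strict Implicit. Unset Printing Implicit Defensive.
Import Order.TTheory GRing.Theory Num.Theory.
Local Open Scope ring_scope.

Section Defs.
Variable F : fieldType.

(* Bivariate polynomials Q(X,Y) = \sum_t Q_t(X) Y^t are elements of
   {poly {poly F}}: the outer variable is Y, coefficients Q_t lie in F[X]. *)

Definition is_GRS_codeword (n k : nat) (alpha w r : 'I_n -> F) : Prop :=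
  exists f : {poly F}, (size f <= k)%N /\ forall i, r i = w i * f.[alpha i].

Definition shiftXY (Q : {poly {poly F}}) (a b : F) : {poly {poly F}} :=
  (map_poly (fun p : {poly F} => p \Po ('X + a%:P)) Q) \Po ('X + (b%:P)%:P).

Definition vanishes_mult (Q : {poly {poly F}}) (a b : F) (s : nat) : Prop :=
  forall u v : nat, (u + v < s)%N -> ((shiftXY Q a b)`_v)`_u = 0.

Definition in_M (n s l : nat) (alpha w r : 'I_n -> F) (Q : {poly {poly F}}) : Prop :=
  (size Q <= l.+1)%N /\ forall i, vanishes_mult Q (alpha i) (r i / w i) s.

Definition rowpoly (m : nat) (v : 'rV[{poly F}]_m) : {poly {poly F}} :=
  \sum_(t < m) (v ord0 t)%:P * 'X^t.

Definition represents_basis_M (n s l : nat) (alpha w r : 'I_n -> F)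
    (B : 'M[{poly F}]_(l.+1)) : Prop :=
  [/\ forall i, in_M s l alpha w r (rowpoly (row i B)),
      forall c : 'I_l.+1 -> {poly F},
        \sum_i (c i)%:P * rowpoly (row i B) = 0 -> forall i, c i = 0 &
      forall Q, in_M s l alpha w r Q ->
        exists c : 'I_l.+1 -> {poly F}, Q = \sum_i (c i)%:P * rowpoly (row i B)].

Definition W_mx (k l : nat) : 'M[{poly F}]_(l.+1) :=
  diag_mx (\row_(t < l.+1) 'X^(t * (k.-1))).

(* row degree: deg v = max_i deg v_i ; we use sizes (size = deg + 1, size 0 = 0)
   so that zero entries never attain the maximum of a nonzero row *)
Definition rowsize (m : nat) (v : 'rV[{poly F}]_m) : nat := \max_j size (v ord0 j).
Definition rdeg (m : nat) (v : 'rV[{poly F}]_m) : nat := (rowsize v).-1.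

Definition LP (m : nat) (v : 'rV[{poly F}]_m) : nat :=
  \max_(j | size (v ord0 j) == rowsize v) (j : nat).

Definition weak_popov (m p : nat) (V : 'M[{poly F}]_(m, p)) : Prop :=
  forall i j : 'I_m, i != j -> LP (row i V) != LP (row j V).

Definition mxdeg (m : nat) (V : 'M[{poly F}]_m) : nat := \sum_i rdeg (row i V).
Definition orthodefect (m : nat) (V : 'M[{poly F}]_m) : int :=
  (mxdeg V)%:Z - ((size (\det V)).-1)%:Z.

Definition CI_mx (s l : nat) (R : {poly F}) (B : 'M[{poly F}]_(l.+1)) :
    'M[{poly F}]_(l.+2) :=
  let P : {poly {poly F}} := 'X^((l - s).+1) * ('X - R%:P) ^+ s in
  \matrix_(i < l.+2, j < l.+2)
    if ((i < l.+1) && (j < l.+1))%N then B (inord i) (inord j)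
    else if (i == l.+1 :> nat) then P`_j else 0.

End Defs.
Arguments represents_basis_M [F n] s l alpha w r B.
Arguments in_M [F n] s l alpha w r Q.

From HB Require Import structures.
From mathcomp Require Import all_boot all_order all_algebra perm.
From mathcomp Require Import zify.
Set Implicit Arguments. Unset Strict Implicit. Unset Printing Implicit Defensive.
Import Order.TTheory GRing.Theory Num.Theory.
Local Open Scope ring_scope.

(* The last column of C^I W_{l+1} vanishes except in the last row, where it is
   X^{(l+1)(k-1)} times the coefficient of Y^{l+1} in the monic
   Y^{l-s+1} (Y - R)^s.  Hence det (C^I W_{l+1}) = X^{(l+1)(k-1)} det (B W_l).
   A weak Popov matrix with nonzero rows has orthogonality defect 0: in the
   Leibniz expansion only the permutation sending every row to its leading
   position reaches degree deg V, and it does so with a nonzero coefficient.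
   The new last row has degree s deg R + (l-s+1)(k-1), attained at Y^{l-s+1}
   whose coefficient is (-R)^s, so the defect is s (deg R - k + 1); finally
   deg R < n, and deg R >= k because r is not a codeword. *)

Section TopCoefficients.
Variable R : nzRingType.

Lemma coefM_size_le (p q : {poly R}) a b :
  (size p <= a.+1)%N -> (size q <= b.+1)%N -> (p * q)`_(a + b) = p`_a * q`_b.
Proof.
move=> sp sq; rewrite coefM (bigD1 (Ordinal (leq_addr b a.+1))) //= addKn.
rewrite big1 ?addr0 // => -[j hj] /= nj.
case: (ltngtP j a) => [lt_ja | lt_aj | eq_ja].
- by rewrite (leq_sizeP _ _ sq) ?mulr0 //; lia.
- by rewrite (leq_sizeP _ _ sp) ?mul0r.
- by move: nj; rewrite -val_eqE /= eq_ja eqxx.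
Qed.

Lemma coef_prod_size_le (I : finType) (p : I -> {poly R}) (d : I -> nat) :
  (forall i, size (p i) <= (d i).+1)%N ->
  (size (\prod_i p i)%R <= (\sum_i d i).+1)%N /\
  (\prod_i p i)`_(\sum_i d i) = \prod_i (p i)`_(d i).
Proof.
move=> sp; elim/big_rec3: _ => [|i z y x _ [sx cx]]; first by rewrite size_poly1 coef1.
split; last by rewrite coefM_size_le // cx.
by apply: leq_trans (size_polyMleq _ _) _; have := sp i; lia.
Qed.

End TopCoefficients.

Lemma size_coef_XsubC_exp (R : comNzRingType) (c : {poly R}) n j :
  (size ((('X - c%:P) ^+ n)`_j)%R <= (n - j) * (size c).-1 + 1)%N.
Proof.
rewrite (addrC 'X) exprDn coef_sum; apply: leq_trans (size_sum _ _ _) _.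
apply/bigmax_leqP => i _; rewrite coefMn -polyCN -polyC_exp coefCM coefXn.
have [-> | _] := eqVneq j i; last by rewrite mulr0 mul0rn size_poly0.
rewrite mulr1 -scaler_nat (leq_trans (size_scale_leq _ _)) //.
by rewrite (leq_trans (size_poly_exp_leq _ _)) // size_polyN addn1 mulnC.
Qed.

Lemma exists_perm_gt (m : nat) (s t : 'S_m) : s != t -> exists i, (t i < s i)%N.
Proof.
move=> neq_st; apply/existsP; apply: contraR neq_st; rewrite negb_exists => /forallP le_st.
have {}le_st i : (s i <= t i)%N by rewrite leqNgt le_st.
have sum_perm (u : 'S_m) : (\sum_i (u i : nat) = \sum_(i : 'I_m) (i : nat))%N.
  by rewrite [RHS](reindex_inj (@perm_inj _ u)).
have : (\sum_i (t i - s i) == 0)%N by rewrite sumnB // !sum_perm subnn.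
rewrite sum_nat_eq0 => /forallP eq_st; apply/eqP/permP => i; apply/val_inj/eqP.
by rewrite eqn_leq le_st -subn_eq0 (implyP (eq_st i)).
Qed.

Lemma rowsizeE (F : fieldType) m n (V : 'M[{poly F}]_(m, n)) i :
  rowsize (row i V) = (\max_j size (V i j))%N.
Proof. by apply: eq_bigr => j _; rewrite mxE. Qed.

Lemma rowsize_gt0 (F : fieldType) n (v : 'rV[{poly F}]_n) : v != 0 -> (0 < rowsize v)%N.
Proof.
case/rV0Pn => j vj; apply: leq_trans (@leq_bigmax _ (fun j => size (v 0 j)) j).
by rewrite size_poly_gt0.
Qed.

Section WeakPopovDeterminant.
Variables (F : fieldType) (m : nat) (V : 'M[{poly F}]_m).

Lemma size_le_rowsize i j : (size (V i j) <= rowsize (row i V))%N.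
Proof. by rewrite rowsizeE (@leq_bigmax _ (fun j => size (V i j))). Qed.

Lemma size_le_rdeg i j : (size (V i j) <= (rdeg (row i V)).+1)%N.
Proof. exact: leq_trans (size_le_rowsize i j) (leqSpred _). Qed.

Lemma size_det_le_mxdeg : (size (\det V) <= (mxdeg V).+1)%N.
Proof.
apply: leq_trans (size_sum _ _ _) _; apply/bigmax_leqP => s _.
by rewrite size_Msign; case: (coef_prod_size_le (fun i => size_le_rdeg i (s i))).
Qed.

Lemma LP_lt i : (LP (row i V) < m)%N.
Proof.
have m_gt0 : (0 < m)%N by case: i => i /=; lia.
suff : (LP (row i V) <= m.-1)%N by lia.
by apply/bigmax_leqP => j _; have := ltn_ord j; lia.
Qed.

Definition leading_pos i : 'I_m := Ordinal (LP_lt i).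

Lemma size_leading_pos i : size (V i (leading_pos i)) = rowsize (row i V).
Proof.
have [|j0 max_j0] := @bigop.eq_bigmax _ (fun j => size (row i V ord0 j)).
  by rewrite card_ord; case: i => i /=; lia.
pose P j := size (row i V ord0 j) == rowsize (row i V).
have [|j Pj eq_LP] := @eq_bigmax_cond _ P (fun j => j : nat).
  by apply/card_gt0P; exists j0; rewrite /P /rowsize max_j0 unfold_in /=.
have -> : leading_pos i = j by apply/val_inj; rewrite /= -eq_LP.
by move/eqP: Pj; rewrite mxE.
Qed.

Lemma size_gt_leading_pos i (j : 'I_m) :
  (leading_pos i < j)%N -> (size (V i j) < rowsize (row i V))%N.
Proof.
move=> lt_ij; rewrite ltn_neqAle size_le_rowsize andbT.
apply: contraTneq lt_ij => eq_j; rewrite -leqNgt.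
pose P j := size (row i V ord0 j) == rowsize (row i V).
by apply: (@leq_bigmax_cond _ P (fun j => j : nat)); rewrite /P mxE eq_j.
Qed.

Hypothesis wpV : weak_popov V.
Hypothesis rowsV : forall i, (0 < rowsize (row i V))%N.

Lemma leading_pos_inj : injective leading_pos.
Proof.
move=> i j /(congr1 val) /= eq_LP.
by case: (eqVneq i j) => // /wpV; rewrite eq_LP eqxx.
Qed.

Let pi := perm leading_pos_inj.

Lemma coef_det_mxdeg_neq0 : (\det V)`_(mxdeg V) != 0.
Proof.
have coefMsign (b : bool) (p : {poly F}) j : ((-1) ^+ b * p)`_j = (-1) ^+ b * p`_j.
  by rewrite !mulr_sign; case: b; rewrite ?coefN.
have top (s : 'S_m) := (coef_prod_size_le (fun i => size_le_rdeg i (s i))).2.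
have rowsize_rdeg i : rowsize (row i V) = (rdeg (row i V)).+1 by rewrite prednK.
rewrite /determinant coef_sum (bigD1 pi) //= [X in _ + X]big1 ?addr0.
  rewrite coefMsign top mulf_neq0 ?signr_eq0 //; apply/prodf_neq0 => i _.
  have size_pi : size (V i (pi i)) = (rdeg (row i V)).+1.
    by rewrite permE size_leading_pos rowsize_rdeg.
  have : lead_coef (V i (pi i)) != 0 by rewrite lead_coef_eq0 -size_poly_gt0 size_pi.
  by rewrite lead_coefE size_pi.
move=> s neq_s_pi; have [i lt_pi_s] := exists_perm_gt neq_s_pi.
have size_s : (size (V i (s i)) <= rdeg (row i V))%N.
  by move: lt_pi_s; rewrite permE => /size_gt_leading_pos; rewrite rowsize_rdeg.
by rewrite coefMsign top (bigD1 i) //= (leq_sizeP _ _ size_s) ?mul0r ?mulr0.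
Qed.

Lemma size_det_weak_popov : size (\det V) = (mxdeg V).+1.
Proof.
apply/eqP; rewrite eqn_leq size_det_le_mxdeg ltnNge.
by apply: contra coef_det_mxdeg_neq0 => /leq_sizeP ->.
Qed.

End WeakPopovDeterminant.

Lemma mul_W_mxE (F : fieldType) m k l (M : 'M[{poly F}]_(m, l.+1)) i j :
  (M *m W_mx F k l) i j = M i j * 'X^(j * k.-1).
Proof. by rewrite mul_mx_diag !mxE. Qed.

Lemma row_mul_W_mx_neq0 (F : fieldType) m k l (M : 'M[{poly F}]_(m, l.+1)) i :
  row i M != 0 -> row i (M *m W_mx F k l) != 0.
Proof.
case/rV0Pn => j; rewrite mxE => Mij; apply/rV0Pn; exists j.
by rewrite mxE mul_W_mxE mulf_neq0 ?expf_neq0 ?polyX_eq0.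
Qed.

Section GRSInterpolation.
Variables (F : fieldType) (n : nat) (alpha w r : 'I_n -> F).

Lemma size_interpolant_gt k (R : {poly F}) :
  (forall i, w i != 0) -> (forall i, R.[alpha i] = r i / w i) ->
  ~ is_GRS_codeword k alpha w r -> (k < size R)%N.
Proof.
move=> w_neq0 R_alpha; apply: contra_notT; rewrite -leqNgt => size_R.
by exists R; split => // i; rewrite R_alpha mulrC divfK.
Qed.

Lemma basis_M_row_neq0 s l (B : 'M[{poly F}]_l.+1) :
  represents_basis_M s l alpha w r B -> forall i, row i B != 0.
Proof.
case=> _ B_free _ i; apply/eqP => B_i0.
suff : (i == i)%:R = 0 :> {poly F} by rewrite eqxx; apply/eqP; rewrite oner_eq0.
apply: (B_free (fun j => (j == i)%:R)); rewrite (bigD1 i) //= big1 => [|j /negbTE ->].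
  by rewrite B_i0 /rowpoly big1 ?mulr0 ?addr0 // => t _; rewrite mxE mul0r.
by rewrite mul0r.
Qed.

End GRSInterpolation.

Section InterpolationMatrix.
Variables (F : fieldType) (k s l : nat) (R : {poly F}) (B : 'M[{poly F}]_l.+1).
Local Notation BW := (B *m W_mx F k l).
Local Notation CW := (CI_mx s R B *m W_mx F k l.+1).
Local Notation a := (l - s).+1.
Local Notation P := ('X^a * ('X - R%:P) ^+ s).
Local Notation widen := (widen_ord (leqnSn l.+1)).

Lemma CIW_widen i j : CW (widen i) (widen j) = BW i j.
Proof. by rewrite !mul_W_mxE /CI_mx mxE /= !ltn_ord !inord_val. Qed.

Lemma CIW_last_col i : CW (widen i) ord_max = 0.
Proof. by rewrite mul_W_mxE mxE /= ltnn andbF ltn_eqF ?mul0r. Qed.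

Lemma CIW_last_row j : CW ord_max j = P`_j * 'X^(j * k.-1).
Proof. by rewrite mul_W_mxE mxE /= ltnn eqxx. Qed.

Lemma mxdeg_CIW : mxdeg CW = (mxdeg BW + rdeg (row ord_max CW))%N.
Proof.
rewrite /mxdeg big_ord_recr /=; congr (_ + _)%N; apply: eq_bigr => i _.
rewrite /rdeg !rowsizeE big_ord_recr /= CIW_last_col size_poly0 maxn0.
by congr _.-1; apply: eq_bigr => j _; rewrite CIW_widen.
Qed.

Hypothesis s_le_l : (s <= l)%N.

Lemma det_CIW : \det CW = 'X^(l.+1 * k.-1) * \det BW.
Proof.
have P_top : P`_l.+1 = 1.
  rewrite coefXnM ifN; last by rewrite -leqNgt; lia.
  have /monicP := monic_exp s (monicXsubC R).
  by rewrite lead_coefE size_exp_XsubC (_ : l.+1 - a = s)%N //; lia.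
rewrite (expand_det_col _ ord_max) big_ord_recr /= big1 ?add0r => [|i _]; last first.
  by rewrite CIW_last_col mul0r.
rewrite CIW_last_row P_top mul1r /cofactor addnn -signr_odd odd_double mul1r.
congr (_ * \det _); apply/matrixP => i j; rewrite [LHS]mxE [LHS]mxE.
have lift_widen (i' : 'I_l.+1) : lift ord_max i' = widen i'.
  exact/val_inj/lift_max.
by rewrite !lift_widen CIW_widen.
Qed.

Hypothesis R_neq0 : R != 0.
Hypothesis k_le_R : (k.-1 <= (size R).-1)%N.

Lemma size_CIW_last_row_le j :
  (size (CW ord_max j) <= (s * (size R).-1 + a * k.-1).+1)%N.
Proof.
rewrite CIW_last_row coefXnM; case: ltnP => [_|a_le_j]; first by rewrite mul0r size_poly0.
apply: leq_trans (size_polyMleq _ _) _; rewrite size_polyXn addnS /=.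
have := size_coef_XsubC_exp R s (j - a); have := ltn_ord j.
move: (size _) (size R).-1 k.-1 k_le_R => m dR kd; nia.
Qed.

Lemma size_CIW_last_row_at_a :
  size (CW ord_max (inord a)) = (s * (size R).-1 + a * k.-1).+1.
Proof.
have P_a : P`_a = (- R) ^+ s.
  by rewrite coefXnM ltnn subnn -horner_coef0 horner_exp hornerXsubC sub0r.
have size_P_a : size ((- R) ^+ s) = (s * (size R).-1).+1.
  rewrite -(prednK (_ : 0 < size ((- R) ^+ s))%N); last first.
    by rewrite size_poly_gt0 expf_neq0 ?oppr_eq0.
  by rewrite size_exp size_polyN mulnC.
rewrite CIW_last_row inordK; last by lia.
by rewrite P_a size_mulXn -?size_poly_gt0 size_P_a // addnS addnC.
Qed.

Lemma rdeg_CIW_last_row : rdeg (row ord_max CW) = (s * (size R).-1 + a * k.-1)%N.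
Proof.
rewrite /rdeg; suff -> : rowsize (row ord_max CW) = (s * (size R).-1 + a * k.-1).+1 by [].
rewrite rowsizeE; apply/eqP; rewrite eqn_leq; apply/andP; split.
  by apply/bigmax_leqP => j _; exact: size_CIW_last_row_le.
by rewrite -size_CIW_last_row_at_a (@leq_bigmax _ (fun j => size (CW ord_max j))).
Qed.

End InterpolationMatrix.

Theorem lemma8 (F : finFieldType) (n k s l : nat)
    (alpha w r : 'I_n -> F) (R : {poly F}) (B : 'M[{poly F}]_(l.+1)) :
  (1 <= k)%N -> (k < n)%N -> (n < #|F|)%N ->
  injective alpha -> (forall i, alpha i != 0) -> (forall i, w i != 0) ->
  (0 < s)%N -> (s <= l)%N ->
  (size R <= n)%N -> (forall i, R.[alpha i] = r i / w i) ->
  ~ is_GRS_codeword k alpha w r ->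
  represents_basis_M s l alpha w r B ->
  weak_popov (B *m W_mx F k l) ->
  orthodefect (CI_mx s R B *m W_mx F k l.+1)
    = s%:Z * (((size R).-1)%:Z - k%:Z + 1) /\
  s%:Z * (((size R).-1)%:Z - k%:Z + 1) <= s%:Z * (n%:Z - k%:Z).
Proof.
move=> k_gt0 _ _ _ _ w_neq0 _ s_le_l size_R R_alpha not_codeword basis wpBW.
have lt_kR := size_interpolant_gt w_neq0 R_alpha not_codeword.
have R_neq0 : R != 0 by rewrite -size_poly_gt0 (leq_ltn_trans _ lt_kR).
have rowsBW i : (0 < rowsize (row i (B *m W_mx F k l)))%N.
  exact/rowsize_gt0/row_mul_W_mx_neq0/(basis_M_row_neq0 basis).
have size_detBW := size_det_weak_popov wpBW rowsBW.
have deg_detCW : (size (\det (CI_mx s R B *m W_mx F k l.+1))).-1 =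
    (l.+1 * k.-1 + mxdeg (B *m W_mx F k l))%N.
  by rewrite det_CIW // mulrC size_mulXn -?size_poly_gt0 ?size_detBW ?addnS.
rewrite /orthodefect deg_detCW mxdeg_CIW rdeg_CIW_last_row //; last by lia.
move: (mxdeg _) lt_kR size_R => M; move: (size R) => m; split; nia.
Qed.
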